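(* Let $D$ be a division ring with center $F$ such that $D$ is algebraic over $F$. Let $V$ be a maximal subring of $F$ which is not a field, and let $x\in F\setminus V$. Suppose that $T=\{\alpha\in D: \alpha \text{ is integral over } V\}$ is a subring of $D$. Then $D$ has a maximal subring $W$ such that $T\subseteq W$, $x\notin W$ (in particular $x\notin T$), and $F\cap W=V$.
   Context: All rings are associative unital and subrings share the identity. A maximal subring of a ring $T$ is a proper subring maximal under inclusion among proper subrings of $T$. An element $\alpha\in D$ is integral over $V\subseteq F$ if it satisfies a monic polynomial with coefficients in $V$. *)

From mathcomp Require Import all_boot all_algebra.
Set Implicit Arguments. Unset Strict Implicit. Unset Printing Implicit Defensive.
Import GRing.Theory.
Local Open Scope ring_scope.

Definition psubset {R : Type} (A B : R -> Prop) : Prop := forall a, A a -> B a.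

Definition is_subring {R : nzRingType} (S : R -> Prop) : Prop :=
  [/\ S 1, (forall a b, S a -> S b -> S (a - b)) & (forall a b, S a -> S b -> S (a * b))].

Definition maximal_subring_of {R : nzRingType} (A S : R -> Prop) : Prop :=
  [/\ is_subring S, psubset S A, (exists a, A a /\ ~ S a) &
      (forall S' : R -> Prop, is_subring S' -> psubset S' A ->
         (exists a, A a /\ ~ S' a) -> psubset S S' -> psubset S' S)].

Definition is_division_ring (D : unitRingType) : Prop :=
  forall a : D, a != 0 -> a \is a GRing.unit.

Definition center {R : nzRingType} (a : R) : Prop := forall b : R, a * b = b * a.

Definition algebraic_over_center (D : nzRingType) : Prop :=
  forall a : D, exists p : {poly D}, [/\ p != 0, (forall i, center p`_i) & root p a].

Definition integral_over {D : nzRingType} (V : D -> Prop) (a : D) : Prop :=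
  exists p : {poly D}, [/\ p \is monic, (forall i, V p`_i) & root p a].

Definition is_field_subring {D : unitRingType} (S : D -> Prop) : Prop :=
  forall a, S a -> a != 0 -> S a^-1.

From mathcomp Require Import all_boot all_algebra.
From Stdlib Require Import Classical.
From mathcomp Require classical_sets.
Import GRing.Theory.
Local Open Scope ring_scope.
Set Implicit Arguments.
Unset Strict Implicit.

(* Fix v in V with v^-1 notin V.  By maximality of V in the center F, every
   element of F lands in V after multiplication by a power of v; clearing
   denominators in a monic central polynomial of a in D then shows that
   a * v^N is integral over V for some N.  Hence a subring of D containing T
   and x contains F (maximality again) and so every a = (a * v^N) * v^-N.
   Also x notin T, for otherwise F is contained in T and v^-1, being integral
   over V, lies in V.  Zorn's lemma gives a subring W containing T, maximal
   with x notin W, which is then a maximal subring of D; and F /\ W is a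
   proper subring of F containing V, so it is V. *)

Section Subrings.
Variable R : nzRingType.
Implicit Types (S A V : R -> Prop) (a b : R).

Lemma subring1 S : is_subring S -> S 1. Proof. by case. Qed.

Lemma subringB S a b : is_subring S -> S a -> S b -> S (a - b).
Proof. by case=> _ + _; apply. Qed.

Lemma subringM S a b : is_subring S -> S a -> S b -> S (a * b).
Proof. by case=> _ _; apply. Qed.

Lemma subring0 S : is_subring S -> S 0.
Proof. by move=> hS; rewrite -(subrr 1); exact: subringB hS (subring1 hS) (subring1 hS). Qed.

Lemma subringN S a : is_subring S -> S a -> S (- a).
Proof. by move=> hS Sa; rewrite -sub0r; exact: subringB hS (subring0 hS) Sa. Qed.

Lemma subringD S a b : is_subring S -> S a -> S b -> S (a + b).
Proof. by move=> hS Sa Sb; rewrite -[b]opprK; exact: subringB hS Sa (subringN hS Sb). Qed.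

Lemma subringX S a n : is_subring S -> S a -> S (a ^+ n).
Proof.
move=> hS Sa; elim: n => [|n IHn]; first by rewrite expr0; apply: subring1.
by rewrite exprS; apply: subringM.
Qed.

Lemma subring_sum S n (F : 'I_n -> R) :
  is_subring S -> (forall i, S (F i)) -> S (\sum_(i < n) F i).
Proof.
move=> hS SF; elim/big_ind: _ => //; first exact: subring0.
by move=> a b; apply: subringD.
Qed.

Lemma subringI S S' : is_subring S -> is_subring S' -> is_subring (fun a => S a /\ S' a).
Proof.
move=> hS hS'; split; first by split; apply: subring1.
- by move=> a b [Sa S'a] [Sb S'b]; split; apply: subringB.
- by move=> a b [Sa S'a] [Sb S'b]; split; apply: subringM.
Qed.

Lemma subring_center : is_subring (@center R).
Proof.
split; first by move=> b; rewrite mul1r mulr1.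
- by move=> a b ca cb c; rewrite mulrBl mulrBr ca cb.
- by move=> a b ca cb c; rewrite -mulrA cb mulrA ca mulrA.
Qed.

Lemma maximal_subring_superset A V S : maximal_subring_of A V ->
  is_subring S -> psubset S A -> psubset V S -> (exists a, S a /\ ~ V a) ->
  psubset A S.
Proof.
case=> _ _ _ maxV hS SA VS [b [Sb nVb]] a Aa; apply: NNPP => nSa.
by apply/nVb/(maxV S hS SA _ VS b Sb); exists a.
Qed.

(* Admitting the empty set makes the union of the empty chain an admissible
   set; a maximal admissible set is nonempty since [T] itself is admissible. *)
Lemma exists_maximal_subring_avoiding T x : is_subring T -> ~ T x ->
  exists W, [/\ is_subring W, psubset T W, ~ W x &
    forall S, is_subring S -> psubset W S -> ~ S x -> psubset S W].
Proof.
move=> hT nTx.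
pose P S := [/\ ~ S x, (forall a b, S a -> S b -> S (a - b) /\ S (a * b)) &
                ((exists a, S a) -> psubset T S)].
have [W [[nWx closedW TW] maxW]] :
    exists W, P W /\ forall S, classical_sets.proper W S -> ~ P S.
  apply: classical_sets.Zorn_bigcup => F FP chainF; split.
  - by case=> X FX Xx; case: (FP X FX) => + _ _; apply.
  - move=> a b [X FX Xa] [Y FY Yb].
    have [XY|YX] := chainF X Y FX FY.
    + by have [_ + _] := FP Y FY => /(_ a b (XY a Xa) Yb) [? ?]; split; exists Y.
    + by have [_ + _] := FP X FX => /(_ a b Xa (YX b Yb)) [? ?]; split; exists X.
  - move=> [a [X FX Xa]] t Tt; have [_ _ TX] := FP X FX.
    by exists X => //; apply: TX => //; exists a.
have PT : P T.
  split=> //; last by move=> _ a.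
  by move=> a b Ta Tb; split; [apply: subringB | apply: subringM].
have {}TW : psubset T W.
  apply: TW; apply: NNPP => W0; apply: (maxW T) => //; split.
  - by move=> a Wa; case: W0; exists a.
  - by move=> TW; apply: W0; exists 1; apply: TW; apply: subring1 hT.
exists W; split=> //.
- split; first exact: TW _ (subring1 hT).
  + by move=> a b Wa Wb; case: (closedW a b Wa Wb).
  + by move=> a b Wa Wb; case: (closedW a b Wa Wb).
move=> S hS WS nSx; apply: NNPP => nSW; apply: (maxW S); first by split.
split=> //; first by move=> a b Sa Sb; split; [apply: subringB | apply: subringM].
by move=> _ a Ta; apply/WS/TW.
Qed.

Lemma exists_maximal_subring T x : is_subring T -> ~ T x ->
  (forall S, is_subring S -> psubset T S -> S x -> forall a, S a) ->
  exists W, [/\ maximal_subring_of (fun _ => True) W, psubset T W & ~ W x].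
Proof.
move=> hT nTx fullT.
have [W [hW TW nWx maxW]] := exists_maximal_subring_avoiding hT nTx.
exists W; split=> //; split=> //; first by exists x.
move=> S hS _ [a [_ nSa]] WS; apply: maxW => // Sx.
by apply/nSa/(fullT S hS _ Sx) => b /TW /WS.
Qed.

End Subrings.

Section Integral.
Variable R : nzRingType.
Implicit Types (S : R -> Prop) (p : {poly R}) (a c : R).

Lemma integral_over_mem S a : is_subring S -> S a -> integral_over S a.
Proof.
move=> hS Sa; exists ('X - a%:P); split; first exact: monicXsubC.
- move=> i; rewrite coefB coefX coefC.
  case: (i == 1)%N; case: (i == 0)%N; rewrite ?subr0 ?sub0r.
  + exact: subringB (subring1 hS) Sa.
  + exact: subring1.
  + exact: subringN.
  + exact: subring0.
- by rewrite rootE hornerXsubC subrr.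
Qed.

Lemma horner_scale p a c : center c ->
  (\poly_(i < size p) (p`_i * c ^+ ((size p).-1 - i))).[a * c] =
  p.[a] * c ^+ (size p).-1.
Proof.
move=> cc; rewrite horner_poly horner_coef mulr_suml; apply: eq_bigr => i _.
have cX (k : nat) : center (c ^+ k) := subringX k (subring_center R) cc.
rewrite exprMn_comm; last by rewrite /GRing.comm cc.
rewrite -mulrA [c ^+ _ * _]cX -!mulrA -exprD subnKC ?mulrA //.
by rewrite -ltnS prednK ?(leq_ltn_trans _ (ltn_ord i)).
Qed.

Lemma integral_mul_center S p a c : is_subring S ->
  p \is monic -> root p a -> center c -> S c -> (forall i, S (c * p`_i)) ->
  integral_over S (a * c).
Proof.
move=> hS mp pa cc Sc Scp; set n := (size p).-1.
have pn : p`_n = 1 by apply/eqP.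
have sp : size p = n.+1 by rewrite prednK // size_poly_gt0 monic_neq0.
exists (\poly_(i < size p) (p`_i * c ^+ (n - i))); split.
- by rewrite monicE lead_coef_poly sp //= pn subnn expr0 mulr1 ?oner_neq0.
- move=> i; rewrite coef_poly; case: ltnP => [|_]; last exact: subring0.
  rewrite sp ltnS leq_eqVlt => /orP[/eqP->|lt_in].
    by rewrite pn subnn expr0 mulr1; apply: subring1.
  rewrite -(subnSK lt_in) exprS mulrA -cc.
  by apply: subringM hS (Scp i) (subringX _ hS Sc).
- by rewrite /root horner_scale // (rootP pa) mul0r.
Qed.

End Integral.

Lemma mem_invr_integral (R : unitRingType) (S : R -> Prop) w :
  is_subring S -> S w -> w \is a GRing.unit -> integral_over S w^-1 -> S w^-1.
Proof.
move=> hS Sw uw [p [mp Sp pw']]; set y := w^-1 in pw' *.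
have yw : y * w = 1 by rewrite mulVr.
have cyw : GRing.comm y w by apply/commr_sym/commrV/commr_refl.
have sp : (0 < size p)%N by rewrite size_poly_gt0 monic_neq0.
move: pw'; rewrite rootE horner_coef -(prednK sp) big_ord_recr /=.
have -> : p`_(size p).-1 = 1 by apply/monicP.
case: (size p).-1 => [|m]; first by rewrite big_ord0 add0r mul1r expr0 oner_eq0.
move/eqP/(congr1 (fun t => t * w ^+ m)).
rewrite mul0r mulrDl mulr_suml mul1r.
have -> : y ^+ m.+1 * w ^+ m = y by rewrite exprS -mulrA -exprMn_comm // yw expr1n mulr1.
move/eqP; rewrite addrC addr_eq0 => /eqP ->.
apply: (subringN hS); apply: (subring_sum hS) => i.
have -> : w ^+ m = w ^+ i * w ^+ (m - i) by rewrite -exprD subnKC // -ltnS.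
rewrite mulrA -(mulrA _ (y ^+ i)) -exprMn_comm // yw expr1n mulr1.
by apply: subringM hS (Sp i) (subringX _ hS Sw).
Qed.

Lemma centerV (R : unitRingType) (a : R) : center a -> center a^-1.
Proof. by move=> ca b; apply/commr_sym/commrV/commr_sym/ca. Qed.

Lemma not_field_subring_witness (R : unitRingType) (V : R -> Prop) :
  ~ is_field_subring V -> exists v, [/\ V v, v != 0 & ~ V v^-1].
Proof.
move=> nfV; apply: NNPP => nv; apply: nfV => a Va a0.
by apply: NNPP => nVa; apply: nv; exists a.
Qed.

Lemma algebraic_over_center_monic (D : unitRingType) (a : D) :
  is_division_ring D -> algebraic_over_center D ->
  exists p : {poly D}, [/\ p \is monic, (forall i, center p`_i) & root p a].
Proof.
move=> divD alg; have [p [p0 cp pa]] := alg a.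
have ulc : lead_coef p \is a GRing.unit by apply/divD; rewrite lead_coef_eq0.
exists ((lead_coef p)^-1 *: p); split.
- by rewrite monicE lead_coef_lreg ?mulVr //; apply: mulrI; rewrite unitrV.
- by move=> i; rewrite coefZ; apply: subringM (subring_center D) _ (cp i); apply/centerV/cp.
- by rewrite /root hornerZ (rootP pa) mulr0.
Qed.

Section MaximalSubringOfCenter.
Variables (D : unitRingType) (V : D -> Prop).
Hypothesis maxV : maximal_subring_of center V.

Let subringV : is_subring V. Proof. by case: maxV. Qed.
Let V_center : psubset V center. Proof. by case: maxV. Qed.

Lemma center_sub_subring S x : center x -> ~ V x ->
  is_subring S -> psubset V S -> S x -> psubset center S.
Proof.
move=> cx nVx hS VS Sx a ca.
have FS : psubset center (fun b => center b /\ S b).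
  apply: maximal_subring_superset maxV (subringI (subring_center D) hS) _ _ _.
  - by move=> b [].
  - by move=> b Vb; split; [apply: V_center | apply: VS].
  - by exists x.
by case: (FS a ca).
Qed.

Section Denominators.
Variable v : D.
Hypotheses (Vv : V v) (uv : v \is a GRing.unit) (nVv : ~ V v^-1).

Let center_vX n : center (v ^+ n).
Proof. exact: subringX (subring_center D) (V_center Vv). Qed.

Lemma subring_fractions : is_subring (fun a => center a /\ exists N, V (v ^+ N * a)).
Proof.
split.
- split; first exact: subring1 (subring_center D).
  by exists 0%N; rewrite mulr1 expr0; apply: subring1 subringV.
- move=> a b [ca [N Na]] [cb [M Mb]]; split; first exact: subringB (subring_center D) ca cb.
  exists (N + M)%N; rewrite mulrBr.
  have -> : v ^+ (N + M) * a = v ^+ M * (v ^+ N * a) by rewrite mulrA -exprD addnC.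
  have -> : v ^+ (N + M) * b = v ^+ N * (v ^+ M * b) by rewrite mulrA -exprD.
  by apply: subringB subringV _ _; apply: subringM subringV (subringX _ subringV Vv) _.
- move=> a b [ca [N Na]] [cb [M Mb]]; split; first exact: subringM (subring_center D) ca cb.
  exists (N + M)%N.
  have -> : v ^+ (N + M) * (a * b) = (v ^+ N * a) * (v ^+ M * b).
    by rewrite exprD -!mulrA; congr (_ * _); rewrite !mulrA ca.
  exact: subringM subringV Na Mb.
Qed.

Lemma center_denominator f : center f -> exists N, V (v ^+ N * f).
Proof.
move=> cf; suff [] : center f /\ exists N, V (v ^+ N * f) by [].
apply: maximal_subring_superset maxV subring_fractions _ _ _ _ cf.
- by move=> a [].
- by move=> a Va; split; [apply: V_center | exists 0%N; rewrite expr0 mul1r].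
- exists v^-1; split => //; split; first exact/centerV/V_center.
  by exists 1%N; rewrite expr1 mulrV //; apply: subring1.
Qed.

Lemma common_denominator (p : {poly D}) : (forall i, center p`_i) ->
  exists N, forall i, V (v ^+ N * p`_i).
Proof.
move=> cp; suff [N VN] : exists N, forall i, (i < size p)%N -> V (v ^+ N * p`_i).
  exists N => i; have [/VN //|le_p_i] := ltnP i (size p).
  by rewrite nth_default // mulr0; apply: subring0 subringV.
elim: (size p) => [|n [M VM]]; first by exists 0%N.
have [N VN] := center_denominator (cp n).
exists (N + M)%N => i; rewrite ltnS leq_eqVlt => /orP[/eqP->|lt_in].
  by rewrite addnC exprD -mulrA; apply: subringM subringV (subringX _ subringV Vv) VN.
by rewrite exprD -mulrA; apply: subringM subringV (subringX _ subringV Vv) (VM _ lt_in).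
Qed.

Lemma integral_mul_vX a : is_division_ring D -> algebraic_over_center D ->
  exists N, integral_over V (a * v ^+ N).
Proof.
move=> divD alg; have [p [mp cp pa]] := algebraic_over_center_monic a divD alg.
have [N VN] := common_denominator cp; exists N.
exact: integral_mul_center subringV mp pa (center_vX N) (subringX _ subringV Vv) VN.
Qed.

Lemma notin_integral_closure x : center x -> ~ V x ->
  is_subring (integral_over V) -> ~ integral_over V x.
Proof.
move=> cx nVx hT Tx; apply/nVv/(mem_invr_integral subringV Vv uv).
apply: (center_sub_subring cx nVx hT _ Tx); last exact/centerV/V_center.
by move=> a; apply: integral_over_mem.
Qed.

Lemma subring_integral_closure_full x : center x -> ~ V x ->
  is_division_ring D -> algebraic_over_center D -> forall S,
  is_subring S -> psubset (integral_over V) S -> S x -> forall a, S a.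
Proof.
move=> cx nVx divD alg S hS TS Sx a.
have VS : psubset V S by move=> b Vb; apply/TS/integral_over_mem.
have [N TaN] := integral_mul_vX a divD alg.
rewrite -(mulrK (unitrX N uv) a); apply: (subringM hS (TS _ TaN)).
by apply: (center_sub_subring cx nVx hS VS Sx); apply/centerV/center_vX.
Qed.

End Denominators.
End MaximalSubringOfCenter.

Unset Implicit Arguments.

Theorem proposition3p1 (D : unitRingType) (V : D -> Prop) (x : D) :
  is_division_ring D ->
  algebraic_over_center D ->
  maximal_subring_of center V ->
  ~ is_field_subring V ->
  center x -> ~ V x ->
  is_subring (integral_over V) ->
  exists W : D -> Prop,
    [/\ maximal_subring_of (fun _ => True) W,
        psubset (integral_over V) W,
        ~ W x &
        (forall a, (center a /\ W a) <-> V a)].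
Proof.
move=> divD alg maxV nfV cx nVx hT.
have [hV VF _ maxVF] := maxV.
have [v [Vv v0 nVv]] := not_field_subring_witness nfV.
have uv : v \is a GRing.unit by apply: divD.
have [W [maxW TW nWx]] := exists_maximal_subring hT
  (notin_integral_closure maxV Vv uv nVv cx nVx hT)
  (subring_integral_closure_full maxV Vv uv nVv cx nVx divD alg).
have VW : psubset V W by move=> a Va; apply/TW/integral_over_mem.
have [hW _ _ _] := maxW.
exists W; split=> // a; split=> [[ca Wa] | Va]; last by split; [apply: VF | apply: VW].
apply: (maxVF (fun b => center b /\ W b)) => //.
- exact: subringI (subring_center D) hW.
- by move=> b [].
- by exists x; split=> // [[]].
- by move=> b Vb; split; [apply: VF | apply: VW].
Qed.
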